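(* Let $n,d\ge1$, $p>d$, and let $\Delta$, $Z$, $A=ZZ^{\top}+\Delta$, $f$, $\Lambda_{ii}$ and $d_F$ be as in the context. Let $\delta>0$ and let $S$ be a second-order critical point of $f$ satisfying the proximity condition \[ d_F(S,Z)\le\delta\sqrt{\frac dn}\,\|\Delta\|_{\mathrm{op}}. \] Then \[ \max_{1\le i\le n}\Big\|\sum_{j\ne i}\Delta_{ij}S_j\Big\|_{\mathrm{op}}\le \delta\sqrt{\frac dn}\,\|\Delta\|_{\mathrm{op}}\max_{1\le i\le n}\|\Delta_i\|_{\mathrm{op}}+\max_{1\le i\le n}\|\Delta_i^{\top}Z\|_{\mathrm{op}}, \] and if \[ n\ge\frac{3\delta^2d\|\Delta\|_{\mathrm{op}}^2}{2n}+\max_{1\le i\le n}\Big\|\sum_{j\ne i}\Delta_{ij}S_j\Big\|_{\mathrm{op}}+\|\Delta\|_{\mathrm{op}}, \] then $S$ is the unique global maximizer of both (P) and (SDP) (in the sense that $SS^{\top}$ is the unique global maximizer of (SDP), has rank $d$, and equals $RR^{\top}$ for the global maximizer $R$ of (P)). In particular this conclusion holds whenever \[ n\ge\frac{3\delta^2d\|\Delta\|_{\mathrm{op}}^2}{2n}+\delta\sqrt{\frac dn}\,\|\Delta\|_{\mathrm{op}}\max_{i}\|\Delta_i\|_{\mathrm{op}}+\max_i\|\Delta_i^{\top}Z\|_{\mathrm{op}}+\|\Delta\|_{\mathrm{op}}. \]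
   Context: $\Delta\in\mathbb{R}^{nd\times nd}$ is symmetric with $d\times d$ blocks $\Delta_{ij}$, $\Delta_{ji}=\Delta_{ij}^{\top}$, $\Delta_{ii}=0$; $\Delta_i^{\top}=[\Delta_{i1},\dots,\Delta_{in}]$ is its $i$-th block row. $Z^{\top}=[I_d,\dots,I_d]\in\mathbb{R}^{d\times nd}$, $A=ZZ^{\top}+\Delta$ (so $A_{ij}=I_d+\Delta_{ij}$). (P) is $\max_{R_i\in O(d)}\sum_{i,j}\langle R_iR_j^{\top},A_{ij}\rangle$; (SDP) is $\max\{\langle A,X\rangle: X\succeq0, X_{ii}=I_d\}$. $\mathrm{St}(d,p)=\{S_i\in\mathbb{R}^{d\times p}:S_iS_i^{\top}=I_d\}$; $S\in\mathbb{R}^{nd\times p}$ has blocks $S_i\in\mathrm{St}(d,p)$ and $f(S)=\langle A,SS^{\top}\rangle=\sum_{i,j}\langle A_{ij},S_iS_j^{\top}\rangle$. Put $\Lambda_{ii}=\frac12\sum_{j=1}^n(S_iS_j^{\top}A_{ji}+A_{ij}S_jS_i^{\top})$. The tangent space at $S_i$ is $T_{S_i}=\{Y\in\mathbb{R}^{d\times p}:S_iY^{\top}+YS_i^{\top}=0\}$. $S$ is a second-order critical point of $f$ if $\sum_jA_{ij}S_j=\Lambda_{ii}S_i$ for all $i$ (vanishing Riemannian gradient) and $\sum_i\langle\Lambda_{ii},\dot S_i\dot S_i^{\top}\rangle\ge\sum_{i,j}\langle A_{ij},\dot S_i\dot S_j^{\top}\rangle$ for all $\dot S_i\in T_{S_i}$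 (negative semidefinite Riemannian Hessian). $d_F(S,Z)=\min\{(\sum_{i}\|S_i-Q\|_F^2)^{1/2}: Q\in\mathbb{R}^{d\times p},QQ^{\top}=I_d\}$. *)

From HB Require Import structures.
From mathcomp Require Import all_boot all_order all_algebra.
From mathcomp Require Import classical_sets reals.
Set Implicit Arguments. Unset Strict Implicit. Unset Printing Implicit Defensive.
Import Order.TTheory GRing.Theory Num.Theory.
Local Open Scope ring_scope.
Local Open Scope classical_set_scope.

Section Defs.
Variable R : realType.

Definition fip m k (X Y : 'M[R]_(m, k)) : R := \sum_(a < m) \sum_(b < k) X a b * Y a b.
Definition frob m k (X : 'M[R]_(m, k)) : R := Num.sqrt (fip X X).

Definition opnorm m k (M : 'M[R]_(m, k)) : R :=
  sup [set y | exists x : 'cV[R]_k, frob x <= 1 /\ y = frob (M *m x)].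

Variables n d : nat.

(* Block structure: row index (i, a) with i : 'I_n, a : 'I_d is encoded
   as mxvec_index i a : 'I_(n * d). *)
Definition blk (M : 'M[R]_(n * d)) (i j : 'I_n) : 'M[R]_(d, d) :=
  \matrix_(a, b) M (mxvec_index i a) (mxvec_index j b).
Definition rblk k (S : 'M[R]_(n * d, k)) (i : 'I_n) : 'M[R]_(d, k) :=
  \matrix_(a, b) S (mxvec_index i a) b.
(* i-th block row [Delta_i1, ..., Delta_in] = Delta_i^T  (d x nd) *)
Definition blkrow (M : 'M[R]_(n * d)) (i : 'I_n) : 'M[R]_(d, n * d) :=
  \matrix_(a, l) M (mxvec_index i a) l.

(* Z^T = [I_d, ..., I_d] *)
Definition Zmx : 'M[R]_(n * d, d) :=
  \matrix_(k, b) (\sum_(i < n) (k == mxvec_index i b)%:R).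

Definition Amx (Delta : 'M[R]_(n * d)) : 'M[R]_(n * d) := Zmx *m Zmx^T + Delta.

Definition fobj (A : 'M[R]_(n * d)) p (S : 'M[R]_(n * d, p)) : R := fip A (S *m S^T).

Definition Lam (A : 'M[R]_(n * d)) p (S : 'M[R]_(n * d, p)) (i : 'I_n) : 'M[R]_d :=
  2^-1 *: \sum_(j < n) (rblk S i *m (rblk S j)^T *m blk A j i
                       + blk A i j *m rblk S j *m (rblk S i)^T).

Definition tangent d' p (Si Y : 'M[R]_(d', p)) : Prop :=
  Si *m Y^T + Y *m Si^T = 0.

Definition stiefel_blocks p (S : 'M[R]_(n * d, p)) : Prop :=
  forall i, rblk S i *m (rblk S i)^T = 1%:M.

Definition second_order_critical (A : 'M[R]_(n * d)) p (S : 'M[R]_(n * d, p)) : Prop :=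
  stiefel_blocks S /\
  (forall i, \sum_(j < n) blk A i j *m rblk S j = Lam A S i *m rblk S i) /\
  (forall Sd : 'M[R]_(n * d, p), (forall i, tangent (rblk S i) (rblk Sd i)) ->
     \sum_(i < n) \sum_(j < n) fip (blk A i j) (rblk Sd i *m (rblk Sd j)^T)
       <= \sum_(i < n) fip (Lam A S i) (rblk Sd i *m (rblk Sd i)^T)).

Definition dF p (S : 'M[R]_(n * d, p)) : R :=
  inf [set y | exists Q : 'M[R]_(d, p), Q *m Q^T = 1%:M /\
                 y = Num.sqrt (\sum_(i < n) frob (rblk S i - Q) ^+ 2)].

Definition psd m (X : 'M[R]_m) : Prop :=
  X^T = X /\ forall x : 'cV[R]_m, 0 <= (x^T *m X *m x) 0 0.

Definition sdp_feasible (X : 'M[R]_(n * d)) : Prop :=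
  psd X /\ forall i, blk X i i = 1%:M.

Definition P_feasible (Rm : 'M[R]_(n * d, d)) : Prop :=
  forall i, rblk Rm i *m (rblk Rm i)^T = 1%:M.

Definition unique_global_max (A : 'M[R]_(n * d)) p (S : 'M[R]_(n * d, p)) : Prop :=
  [/\ sdp_feasible (S *m S^T),
      (forall X, sdp_feasible X -> X <> S *m S^T -> fip A X < fip A (S *m S^T)),
      \rank (S *m S^T) = d &
      exists Rm : 'M[R]_(n * d, d),
        [/\ P_feasible Rm, Rm *m Rm^T = S *m S^T,
            (forall R', P_feasible R' -> fobj A R' <= fobj A Rm) &
            (forall R', P_feasible R' -> fobj A R' = fobj A Rm ->
                        R' *m R'^T = S *m S^T)]].

End Defs.

From HB Require Import structures.
From mathcomp Require Import all_boot all_order all_algebra.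
From mathcomp Require Import boolp classical_sets reals.
From mathcomp Require Import ring lra.
Import Order.TTheory GRing.Theory Num.Theory.
Local Open Scope ring_scope.
Set Implicit Arguments. Unset Strict Implicit. Unset Printing Implicit Defensive.

(* Let Λ be block diagonal with blocks Λ_ii and B := Λ - A (the dual certificate).
   First-order criticality says B S = 0.  Second-order criticality, tested along
   the tangent direction u wᵀ in block i with S_i w = 0 (w exists as p > d),
   gives Λ_ii ⪰ I; and Λ_ii S_i = T + E_i with T = Σ_j S_j, E_i = Σ_{j≠i} Δ_ij S_j,
   so the eigenvalues of Λ_ii are the singular values of T + E_i.  If
   Σ_i |S_i - Q|² ≤ r² with Q Qᵀ = I, then σ_min(T) ≥ n - r²/2, hence
   Λ_ii ⪰ (n - r²/2 - M) I.  Off range Z the matrix A acts as Δ, so B ⪰ ε I there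
   with ε = n - r²/2 - M - ‖Δ‖ > 0; since Zᵀ S = T has full row rank, B ⪰ 0 with
   kernel exactly range S.  On the SDP feasible set ⟨A, X⟩ = Σ_i tr Λ_ii - ⟨B, X⟩,
   so S Sᵀ is the unique maximizer.  The bound on M comes from
   E_i = Δ_iᵀ (S - Z Q) + Δ_iᵀ Z Q. *)

Lemma ler_affine_gt (R : realFieldType) (a b x rho : R) : 0 <= a ->
  (forall r, rho < r -> x <= a * r + b) -> x <= a * rho + b.
Proof.
move=> a0 xr; apply/ler_addgt0Pr => e e0.
have a1 : 0 < a + 1 by rewrite ltr_wpDl.
have := xr (rho + e / (a + 1)); rewrite ltrDl divr_gt0 // => /(_ isT) /le_trans; apply.
by rewrite mulrDr addrAC lerD2l mulrCA ger_pMr // ler_pdivrMr // mul1r lerDl ler01.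
Qed.

Lemma exists_sqr_between (R : rcfType) (x y : R) : 0 <= x -> x ^+ 2 < y ->
  exists2 r, x < r & r ^+ 2 < y.
Proof.
move=> x0 xy; have y0 : 0 < y := le_lt_trans (sqr_ge0 x) xy.
have m0 : 0 <= (x ^+ 2 + y) / 2 by rewrite divr_ge0 // addr_ge0 ?sqr_ge0 ?ltW.
exists (Num.sqrt ((x ^+ 2 + y) / 2)); last by rewrite sqr_sqrtr //; lra.
by rewrite -ltr_sqr ?nnegrE ?sqrtr_ge0 // sqr_sqrtr //; lra.
Qed.

Section MatrixFacts.
Variable F : fieldType.

Lemma mulmx_delta m k (M : 'M[F]_(m, k)) a b : (M *m (delta_mx b 0 : 'cV[F]_k)) a 0 = M a b.
Proof.
rewrite mxE (bigD1 b) //= big1 => [|c /negbTE cb]; last by rewrite mxE cb mulr0.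
by rewrite mxE !eqxx mulr1 addr0.
Qed.

Lemma mulmx_inj_col m k (M N : 'M[F]_(m, k)) :
  (forall w : 'cV[F]_k, M *m w = N *m w) -> M = N.
Proof. by move=> MN; apply/matrixP => a b; rewrite -!(mulmx_delta _ a b) MN. Qed.

Lemma kernel_nonzero m k (M : 'M[F]_(m, k)) : (m < k)%N ->
  exists2 w : 'cV[F]_k, w != 0 & M *m w = 0.
Proof.
move=> mk; have : kermx M^T != 0.
  by rewrite -mxrank_eq0 -lt0n mxrank_ker subn_gt0 (leq_ltn_trans (rank_leq_col _) mk).
have [/forallP K0|/existsP [l Kl] _] := boolP [forall l, row l (kermx M^T) == 0].
  by case/negP; apply/eqP/row_matrixP => l; rewrite row0; apply/eqP.
exists (row l (kermx M^T))^T; first by rewrite trmx_eq0.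
by apply: trmx_inj; rewrite trmx_mul trmxK trmx0 -row_mul mulmx_ker row0.
Qed.

Lemma sandwich_inj d (K W W' : 'M[F]_d) :
  K *m W *m K^T = 1%:M -> K *m W' *m K^T = 1%:M -> W = W'.
Proof.
move=> KW KW'; have [Ku _] : K \in unitmx /\ (W *m K^T) \in unitmx.
  by apply: mulmx1_unit; rewrite mulmxA.
have KTu : K^T \in unitmx by rewrite unitmx_tr.
rewrite -[W](mulKmx Ku) -[W'](mulKmx Ku) -[K *m W](mulmxK KTu) -[K *m W'](mulmxK KTu).
by rewrite KW KW'.
Qed.

End MatrixFacts.

Section FrobeniusInnerProduct.
Variable R : realType.

Lemma fipE m k (X Y : 'M[R]_(m, k)) : fip X Y = \tr (X^T *m Y).
Proof.
rewrite /fip /mxtrace exchange_big /=; apply: eq_bigr => b _.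
by rewrite !mxE; apply: eq_bigr => a _; rewrite mxE.
Qed.

Lemma fipC m k (X Y : 'M[R]_(m, k)) : fip X Y = fip Y X.
Proof. by apply: eq_bigr => a _; apply: eq_bigr => b _; rewrite mulrC. Qed.

Lemma fipDl m k (X Y Z : 'M[R]_(m, k)) : fip (X + Y) Z = fip X Z + fip Y Z.
Proof. by rewrite !fipE linearD /= mulmxDl mxtraceD. Qed.

Lemma fipZl m k a (X Y : 'M[R]_(m, k)) : fip (a *: X) Y = a * fip X Y.
Proof. by rewrite !fipE linearZ /= -scalemxAl mxtraceZ. Qed.

Lemma fipNl m k (X Y : 'M[R]_(m, k)) : fip (- X) Y = - fip X Y.
Proof. by rewrite -scaleN1r fipZl mulN1r. Qed.

Lemma fip0l m k (Y : 'M[R]_(m, k)) : fip 0 Y = 0.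
Proof. by rewrite -(scale0r 0) fipZl mul0r. Qed.

Lemma fipDr m k (X Y Z : 'M[R]_(m, k)) : fip Z (X + Y) = fip Z X + fip Z Y.
Proof. by rewrite fipC fipDl !(fipC Z). Qed.

Lemma fipZr m k a (X Y : 'M[R]_(m, k)) : fip Y (a *: X) = a * fip Y X.
Proof. by rewrite fipC fipZl fipC. Qed.

Lemma fipNr m k (X Y : 'M[R]_(m, k)) : fip Y (- X) = - fip Y X.
Proof. by rewrite fipC fipNl fipC. Qed.

Lemma fip0r m k (Y : 'M[R]_(m, k)) : fip Y 0 = 0.
Proof. by rewrite fipC fip0l. Qed.

Lemma fip_suml m k (I : Type) (r : seq I) (P : pred I) (F : I -> 'M[R]_(m, k)) Y :
  fip (\sum_(i <- r | P i) F i) Y = \sum_(i <- r | P i) fip (F i) Y.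
Proof. by apply: (big_morph (fun X => fip X Y)) => [X Z|]; [exact: fipDl | exact: fip0l]. Qed.

Lemma fip_tr m k (X Y : 'M[R]_(m, k)) : fip X^T Y^T = fip X Y.
Proof.
by rewrite /fip exchange_big; apply: eq_bigr => a _; apply: eq_bigr => b _; rewrite !mxE.
Qed.

Lemma fip_trmull m k l (M : 'M[R]_(m, k)) (Y : 'M[R]_(m, l)) (Z : 'M[R]_(k, l)) :
  fip (M^T *m Y) Z = fip Y (M *m Z).
Proof. by rewrite !fipE trmx_mul trmxK mulmxA. Qed.

Lemma fip_ge0 m k (X : 'M[R]_(m, k)) : 0 <= fip X X.
Proof. by apply: sumr_ge0 => a _; apply: sumr_ge0 => b _; rewrite -expr2 sqr_ge0. Qed.

Lemma fip_eq0 m k (X : 'M[R]_(m, k)) : fip X X = 0 -> X = 0.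
Proof.
have sq_ge0 (x : R) : 0 <= x * x by rewrite -expr2 sqr_ge0.
move/eqP; rewrite psumr_eq0 => [/allP X0|a _]; last exact: sumr_ge0.
apply/matrixP => a b; move/(_ a (mem_index_enum a)): X0.
rewrite psumr_eq0 // => /allP/(_ b (mem_index_enum b)).
by rewrite -expr2 sqrf_eq0 mxE => /eqP.
Qed.

Lemma frob_sqr m k (X : 'M[R]_(m, k)) : frob X ^+ 2 = fip X X.
Proof. by rewrite sqr_sqrtr // fip_ge0. Qed.

Lemma frob_ge0 m k (X : 'M[R]_(m, k)) : 0 <= frob X.
Proof. exact: sqrtr_ge0. Qed.

Lemma frob_le m k (X : 'M[R]_(m, k)) c : 0 <= c -> (frob X <= c) = (fip X X <= c ^+ 2).
Proof. by move=> c0; rewrite -ler_sqr ?nnegrE ?frob_ge0 // frob_sqr. Qed.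

Lemma frob_tr m k (X : 'M[R]_(m, k)) : frob X^T = frob X.
Proof. by rewrite /frob fip_tr. Qed.

Lemma frob_eq0 m k (X : 'M[R]_(m, k)) : frob X = 0 -> X = 0.
Proof. by move=> X0; apply: fip_eq0; rewrite -frob_sqr X0 expr0n. Qed.

Lemma frob_gt0 m k (X : 'M[R]_(m, k)) : X != 0 -> 0 < frob X.
Proof. by move=> X0; rewrite lt_def frob_ge0 andbT; apply: contra X0 => /eqP/frob_eq0 ->. Qed.

Lemma frob0 m k : frob (0 : 'M[R]_(m, k)) = 0.
Proof. by rewrite /frob fip0l sqrtr0. Qed.

Lemma frobZ m k a (X : 'M[R]_(m, k)) : frob (a *: X) = `|a| * frob X.
Proof. by rewrite /frob fipZl fipZr mulrA -expr2 sqrtrM ?sqr_ge0 // sqrtr_sqr. Qed.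

Lemma frobN m k (X : 'M[R]_(m, k)) : frob (- X) = frob X.
Proof. by rewrite /frob fipNl fipNr opprK. Qed.

Lemma fip_le_frob m k (X Y : 'M[R]_(m, k)) : fip X Y <= frob X * frob Y.
Proof.
have [->|X0] := eqVneq X 0; first by rewrite fip0l frob0 mul0r.
have [->|Y0] := eqVneq Y 0; first by rewrite fip0r frob0 mulr0.
set a := frob X; set b := frob Y.
have ab0 : 0 < a * b by rewrite mulr_gt0 // frob_gt0.
have := fip_ge0 (b *: X - a *: Y).
rewrite fipDl !fipDr !fipNl !fipNr !fipZl !fipZr -!frob_sqr -/a -/b (fipC Y X).
by rewrite -subr_ge0; nra.
Qed.

Lemma fip_sqr_le m k (X Y : 'M[R]_(m, k)) : fip X Y ^+ 2 <= fip X X * fip Y Y.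
Proof.
rewrite -real_normK ?num_real // -!frob_sqr -exprMn.
rewrite ler_sqr ?nnegrE ?mulr_ge0 ?frob_ge0 // ler_norml fip_le_frob andbT.
by rewrite lerNl -fipNl -(frobN X) fip_le_frob.
Qed.

Lemma frobD m k (X Y : 'M[R]_(m, k)) : frob (X + Y) <= frob X + frob Y.
Proof.
rewrite frob_le ?addr_ge0 ?frob_ge0 // fipDl !fipDr (fipC Y X) sqrrD -!frob_sqr.
by have := fip_le_frob X Y; lra.
Qed.

Lemma frob_mulmx m k l (M : 'M[R]_(m, k)) (X : 'M[R]_(k, l)) :
  frob (M *m X) <= frob M * frob X.
Proof.
rewrite frob_le ?mulr_ge0 ?frob_ge0 // exprMn !frob_sqr.
have -> : fip M M * fip X X =
    \sum_a \sum_c fip (row a M) (row a M) * fip (col c X)^T (col c X)^T.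
  rewrite /fip mulr_suml; apply: eq_bigr => a _; rewrite -mulr_sumr big_ord1.
  congr (_ * _); first by apply: eq_bigr => b _; rewrite !mxE.
  rewrite exchange_big; apply: eq_bigr => c _; rewrite big_ord1.
  by apply: eq_bigr => b _; rewrite !mxE.
apply: ler_sum => a _; apply: ler_sum => c _.
have -> : (M *m X) a c * (M *m X) a c = fip (row a M) (col c X)^T ^+ 2.
  by rewrite expr2 mxE /fip big_ord1; congr (_ * _); apply: eq_bigr => b _; rewrite !mxE.
exact: fip_sqr_le.
Qed.

Lemma fip_col m k (X Y : 'M[R]_(m, k)) : fip X Y = \sum_c fip (col c X) (col c Y).
Proof.
rewrite /fip exchange_big; apply: eq_bigr => c _; apply: eq_bigr => a _.
by rewrite big_ord1 !mxE.
Qed.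

Lemma fip_delta m (y : 'cV[R]_m) a : fip (delta_mx a 0) y = y a 0.
Proof.
rewrite /fip (bigD1 a) //= big_ord1 big1 => [|c /negbTE ca]; last by rewrite big_ord1 mxE ca mul0r.
by rewrite mxE !eqxx mul1r addr0.
Qed.

Lemma tr_mul_fip m (u y : 'cV[R]_m) : u^T *m y = (fip u y)%:M.
Proof.
by apply/matrixP => a b; rewrite !ord1 !mxE /fip; apply: eq_bigr => c _; rewrite big_ord1 !mxE.
Qed.

Lemma fip_coisometry m k (M : 'M[R]_(m, k)) (x y : 'cV[R]_m) :
  M *m M^T = 1%:M -> fip (M^T *m x) (M^T *m y) = fip x y.
Proof. by move=> MM; rewrite fip_trmull mulmxA MM mul1mx. Qed.

Lemma frob_mul_coisometry m k (M : 'M[R]_(m, k)) (x : 'cV[R]_k) :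
  M *m M^T = 1%:M -> frob (M *m x) <= frob x.
Proof.
move=> MM; have [->|Mx0] := eqVneq (M *m x) 0; first by rewrite frob0 frob_ge0.
rewrite -(ler_pM2r (frob_gt0 Mx0)) -expr2 frob_sqr -fip_trmull fipC.
by apply: le_trans (fip_le_frob _ _) _; rewrite /frob fip_coisometry.
Qed.

Lemma fip_normalize m k (X : 'M[R]_(m, k)) :
  X != 0 -> fip ((frob X)^-1 *: X) ((frob X)^-1 *: X) = 1.
Proof.
move=> X0; rewrite fipZl fipZr -frob_sqr mulrA -expr2 -exprMn mulVf ?expr1n //.
by rewrite gt_eqF ?frob_gt0.
Qed.

End FrobeniusInnerProduct.

Section OperatorNorm.
Variable R : realType.

Lemma opnorm_ub m k (M : 'M[R]_(m, k)) (x : 'cV[R]_k) :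
  frob x <= 1 -> frob (M *m x) <= opnorm M.
Proof.
move=> x1; apply: ub_le_sup; last by exists x.
exists (frob M) => _ [y [y1 ->]]; apply: le_trans (frob_mulmx _ _) _.
by rewrite -[leRHS]mulr1 ler_wpM2l ?frob_ge0.
Qed.

Lemma opnorm_le m k (M : 'M[R]_(m, k)) c :
  (forall x : 'cV[R]_k, frob x <= 1 -> frob (M *m x) <= c) -> opnorm M <= c.
Proof.
move=> Mc; apply: ge_sup => [|_ [x [x1 ->]]]; last exact: Mc.
by exists 0; exists 0; rewrite mulmx0 !frob0 ler01.
Qed.

Lemma opnorm_ge0 m k (M : 'M[R]_(m, k)) : 0 <= opnorm M.
Proof. by have := @opnorm_ub _ _ M 0; rewrite mulmx0 !frob0; apply; apply: ler01. Qed.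

Lemma opnorm0 m k : opnorm (0 : 'M[R]_(m, k)) = 0.
Proof.
by apply/eqP; rewrite eq_le opnorm_ge0 andbT; apply: opnorm_le => x _; rewrite mul0mx frob0.
Qed.

Lemma frob_mulmx_opnorm m k (M : 'M[R]_(m, k)) (x : 'cV[R]_k) :
  frob (M *m x) <= opnorm M * frob x.
Proof.
have [->|x0] := eqVneq x 0; first by rewrite mulmx0 !frob0 mulr0.
have fx0 := frob_gt0 x0.
have := @opnorm_ub _ _ M ((frob x)^-1 *: x).
rewrite -scalemxAr !frobZ ger0_norm ?invr_ge0 ?frob_ge0 // mulVf ?gt_eqF // lexx.
by rewrite ler_pdivrMl // mulrC => /(_ isT).
Qed.

Lemma frob_trmulmx_opnorm m k (M : 'M[R]_(m, k)) (y : 'cV[R]_m) :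
  frob (M^T *m y) <= opnorm M * frob y.
Proof.
have [->|z0] := eqVneq (M^T *m y) 0; first by rewrite frob0 mulr_ge0 ?opnorm_ge0 ?frob_ge0.
rewrite -(ler_pM2r (frob_gt0 z0)) -expr2 frob_sqr fip_trmull mulrAC.
by apply: le_trans (fip_le_frob _ _) _; rewrite mulrC ler_wpM2r ?frob_ge0 ?frob_mulmx_opnorm.
Qed.

Lemma opnorm_eq0 m k (M : 'M[R]_(m, k)) : opnorm M = 0 -> M = 0.
Proof.
move=> M0; apply/matrixP => a b; rewrite -(mulmx_delta M a b).
have /frob_eq0 -> : frob (M *m (delta_mx b 0 : 'cV[R]_k)) = 0.
  apply/le_anti; rewrite frob_ge0 andbT.
  by have := frob_mulmx_opnorm M (delta_mx b 0); rewrite M0 mul0r.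
by rewrite !mxE.
Qed.

End OperatorNorm.

Section QuadraticForms.
Variable R : realType.

Definition qf m (X : 'M[R]_m) (y : 'cV[R]_m) : R := fip y (X *m y).

Lemma qfE m (X : 'M[R]_m) y : (y^T *m X *m y) 0 0 = qf X y.
Proof. by rewrite /qf fipE /mxtrace big_ord1 mulmxA. Qed.

Lemma qf_mul_tr m k (V : 'M[R]_(m, k)) y : qf (V *m V^T) y = fip (V^T *m y) (V^T *m y).
Proof. by rewrite /qf -mulmxA -fip_trmull. Qed.

Lemma fip_outer m (X : 'M[R]_m) (u : 'cV[R]_m) : fip X (u *m u^T) = qf X u.
Proof. by rewrite -fip_tr trmx_mul trmxK fipE trmxK mulmxA mxtrace_mulC -fipE. Qed.

Lemma gram_psd m k (V : 'M[R]_(m, k)) : psd (V *m V^T).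
Proof. by split=> [|x]; [rewrite trmx_mul trmxK | rewrite qfE qf_mul_tr fip_ge0]. Qed.

Lemma fip_sym m (X : 'M[R]_m) (y z : 'cV[R]_m) : X^T = X -> fip y (X *m z) = fip z (X *m y).
Proof. by move=> sX; rewrite -fip_trmull sX fipC. Qed.

Lemma qfDZ m (X : 'M[R]_m) (x y : 'cV[R]_m) t : X^T = X ->
  qf X (x + t *: y) = qf X x + 2 * t * fip y (X *m x) + t ^+ 2 * qf X y.
Proof.
move=> sX; rewrite /qf mulmxDr -scalemxAr fipDl !fipDr !fipZl !fipZr (fip_sym x y sX).
ring.
Qed.

Lemma qfZ m (X : 'M[R]_m) (x : 'cV[R]_m) t : qf X (t *: x) = t ^+ 2 * qf X x.
Proof. by rewrite /qf -scalemxAr fipZl fipZr mulrA expr2. Qed.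

Lemma qfB m (X Y : 'M[R]_m) y : qf (X - Y) y = qf X y - qf Y y.
Proof. by rewrite /qf mulmxBl fipDr fipNr. Qed.

Lemma qf_delta m (X : 'M[R]_m) a : qf X (delta_mx a 0) = X a a.
Proof. by rewrite /qf fip_delta mulmx_delta. Qed.

Lemma fip_mul_tr m k (B : 'M[R]_m) (V : 'M[R]_(m, k)) : B^T = B ->
  fip B (V *m V^T) = \sum_c qf B (col c V).
Proof.
move=> sB; rewrite fipE sB mulmxA mxtrace_mulC -fipE fip_col.
by apply: eq_bigr => c _; rewrite /qf !colE mulmxA.
Qed.

Section Gram.
Variables (m : nat) (X : 'M[R]_m) (i : 'I_m).
Hypotheses (sX : X^T = X) (pX : forall y, 0 <= qf X y).

Lemma psd_diag_ge0 : 0 <= X i i.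
Proof. by rewrite -qf_delta. Qed.

Lemma psd_row0 : X i i = 0 -> forall l, X i l = 0.
Proof.
move=> Xii0 l; apply/eqP/negPn/negP => Xil0.
have := pX (delta_mx l 0 + (- (X l l + 1) / (2 * X i l)) *: delta_mx i 0).
rewrite qfDZ // !qf_delta fip_delta mulmx_delta Xii0 mulr0 addr0.
have -> : X l l + 2 * (- (X l l + 1) / (2 * X i l)) * X i l = -1 by field.
by rewrite oppr_ge0 ler10.
Qed.

(* One step of symmetric Gaussian elimination.  When X i i = 0 the pivot u is 0,
   as 0^-1 = 0, and row i of X already vanishes by psd_row0. *)
Let u := (Num.sqrt (X i i))^-1 *: col i X.

Lemma outer_pivotE a l : (u *m u^T) a l = X a i * X l i / X i i.
Proof.
rewrite !mxE big_ord1 !mxE mulrACA -expr2 exprVn sqr_sqrtr ?psd_diag_ge0 //.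
by rewrite mulrC.
Qed.

Lemma pivot_sym : (X - u *m u^T)^T = X - u *m u^T.
Proof. by rewrite linearB /= trmx_mul trmxK sX. Qed.

Lemma pivot_psd y : 0 <= qf (X - u *m u^T) y.
Proof.
set be := (X *m y) i 0.
have uy : (u^T *m y) 0 0 = (Num.sqrt (X i i))^-1 * be.
  rewrite /be !mxE mulr_sumr; apply: eq_bigr => a _.
  by rewrite /u !mxE mulrA -{2}sX mxE.
have -> : qf (X - u *m u^T) y = qf X y - be ^+ 2 / X i i.
  rewrite qfB qf_mul_tr /fip !big_ord1 -expr2 uy exprMn exprVn sqr_sqrtr ?psd_diag_ge0 //.
  by rewrite mulrC.
have := pX (y + (- be / X i i) *: delta_mx i 0); rewrite qfDZ // qf_delta fip_delta -/be.
have [->|Xii0] := eqVneq (X i i) 0; first by rewrite !invr0 !mulr0 mul0r !addr0 subr0.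
by congr (0 <= _); field.
Qed.

Lemma pivot_row0 l : (X - u *m u^T) i l = 0.
Proof.
rewrite [LHS]mxE [X in _ + X]mxE outer_pivotE.
have [Xii0|Xii0] := eqVneq (X i i) 0; first by rewrite Xii0 !mul0r subr0 psd_row0.
by rewrite mulrAC divff // mul1r -{2}sX mxE subrr.
Qed.

Lemma pivot_col0 a l : X a i = 0 -> (X - u *m u^T) a l = X a l.
Proof. by move=> Xai0; rewrite [LHS]mxE [X in _ + X]mxE outer_pivotE Xai0 !mul0r subr0. Qed.

End Gram.

Lemma psd_gram m (X : 'M[R]_m) : X^T = X -> (forall y, 0 <= qf X y) ->
  exists V : 'M[R]_m, X = V *m V^T.
Proof.
move=> sX pX.
suff [F [_ _ Y0]] : exists F : nat -> 'cV[R]_m,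
    let Y := X - \sum_(l < m) F l *m (F l)^T in
    [/\ Y^T = Y, forall y, 0 <= qf Y y & forall a b : 'I_m, Y a b = 0].
  have -> : X = \sum_(l < m) F l *m (F l)^T.
    by apply/eqP; rewrite -subr_eq0; apply/eqP/matrixP => a b; rewrite Y0 mxE.
  exists (\matrix_(a, l) F l a 0); apply/matrixP => a b; rewrite !mxE summxE.
  by apply: eq_bigr => l _; rewrite !mxE big_ord1 !mxE.
suff gram_upto k : (k <= m)%N -> exists F : nat -> 'cV[R]_m,
    let Y := X - \sum_(l < k) F l *m (F l)^T in
    [/\ Y^T = Y, forall y, 0 <= qf Y y & forall a b : 'I_m, (a < k)%N -> Y a b = 0].
  have [G [sY pY Y0]] := gram_upto m (leqnn m).
  by exists G; split=> // a b; apply: Y0.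
elim: k => [_|k IHk km].
  by exists (fun=> 0); rewrite big_ord0 subr0.
have [F [sY pY Y0]] := IHk (ltnW km).
set Y := X - _ in sY pY Y0.
pose i := Ordinal km.
pose u := (Num.sqrt (Y i i))^-1 *: col i Y.
pose G l := if l == k then u else F l.
exists G; have -> : X - \sum_(l < k.+1) G l *m (G l)^T = Y - u *m u^T.
  rewrite big_ord_recr /= /G eqxx opprD addrA; congr (_ - _ - _).
  by apply: eq_bigr => l _; rewrite ltn_eqF.
split; [exact: pivot_sym | exact: pivot_psd | move=> a b].
rewrite ltnS leq_eqVlt => /predU1P [ak|ak]; last by rewrite pivot_col0 ?Y0.
have -> : a = i by apply: val_inj.
exact: pivot_row0.
Qed.

Lemma psd_mul_sqr_le m (B : 'M[R]_m) K : B^T = B -> (forall y, 0 <= qf B y) ->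
  0 < K -> (forall y, qf B y <= K * fip y y) ->
  forall x, fip (B *m x) (B *m x) <= K * qf B x.
Proof.
move=> sB pB K0 BK x; set y := B *m x.
have := mulr_ge0 (ltW K0) (pB (x + (- K^-1) *: y)); rewrite qfDZ // -/y sqrrN.
have -> : K * (qf B x + 2 * - K^-1 * fip y y + K^-1 ^+ 2 * qf B y)
          = K * qf B x - 2 * fip y y + K^-1 * qf B y by field; rewrite gt_eqF.
have : K^-1 * qf B y <= fip y y by rewrite ler_pdivrMl // BK.
lra.
Qed.

(* If
   xᵀ L x is close to the bottom lam of the Rayleigh quotient then (L - lam) x is
   small, because |B x|² ≤ K xᵀ B x whenever 0 ⪯ B ⪯ K. *)
Section Rayleigh.
Local Open Scope classical_set_scope.
Variables (m : nat) (L : 'M[R]_m).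
Hypotheses (sL : L^T = L) (pL : forall y, 0 <= qf L y).

Let rayleigh := [set q | exists x : 'cV[R]_m, fip x x = 1 /\ q = qf L x].
Let lam := inf rayleigh.

Lemma rayleigh_lbound : has_lbound rayleigh.
Proof. by exists 0 => _ [x [_ ->]]. Qed.

Lemma rayleigh_ge0 : 0 <= lam.
Proof.
have [[q Eq]|E0] := pselect (rayleigh !=set0).
  by apply: lb_le_inf => [|_ [x [_ ->]]]; [exists q|].
rewrite /lam (_ : rayleigh = set0) ?inf0 //.
by apply/seteqP; split => // q Eq; apply: E0; exists q.
Qed.

Lemma qf_ge_rayleigh y : lam * fip y y <= qf L y.
Proof.
have [->|y0] := eqVneq y 0; first by rewrite /qf !fip0l mulr0.
have /(ge_inf rayleigh_lbound) : rayleigh (qf L ((frob y)^-1 *: y)).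
  by exists ((frob y)^-1 *: y); rewrite fip_normalize.
rewrite qfZ exprVn -frob_sqr => /(ler_wpM2r (sqr_ge0 (frob y))) /le_trans; apply.
by rewrite mulrAC mulVf ?mul1r // sqrf_eq0 gt_eqF ?frob_gt0.
Qed.

Lemma rayleigh_residual x : fip x x = 1 ->
  fip ((L - lam%:M) *m x) ((L - lam%:M) *m x) <= (frob L + 1) * (qf L x - lam).
Proof.
move=> x1; have qfLlam y : qf (L - lam%:M) y = qf L y - lam * fip y y.
  by rewrite qfB /qf mul_scalar_mx fipZr.
have -> : qf L x - lam = qf (L - lam%:M) x by rewrite qfLlam x1 mulr1.
apply: psd_mul_sqr_le.
- by rewrite linearB /= sL tr_scalar_mx.
- by move=> y; rewrite qfLlam subr_ge0 qf_ge_rayleigh.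
- by rewrite ltr_pwDr ?frob_ge0.
move=> y; rewrite qfLlam; apply: le_trans (_ : qf L y <= _).
  by rewrite lerBlDr lerDl mulr_ge0 ?fip_ge0 ?rayleigh_ge0.
apply: le_trans (fip_le_frob _ _) _; apply: le_trans (ler_wpM2l (frob_ge0 _) (frob_mulmx _ _)) _.
by rewrite mulrCA -expr2 frob_sqr ler_wpM2r ?fip_ge0 // lerDl.
Qed.

Lemma qf_ge_of_frob_mul_ge c : (forall x : 'cV[R]_m, c * frob x <= frob (L *m x)) ->
  forall u, c * fip u u <= qf L u.
Proof.
move=> Lc u; have [->|u0] := eqVneq u 0; first by rewrite /qf !fip0l mulr0.
apply: le_trans (qf_ge_rayleigh u); rewrite ler_wpM2r ?fip_ge0 //.
apply/ler_addgt0Pr => e e0; set K := frob L + 1.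
have K0 : 0 < K by rewrite ltr_pwDr ?frob_ge0.
have inf_rayleigh : has_inf rayleigh.
  split; last exact: rayleigh_lbound.
  by exists (qf L ((frob u)^-1 *: u)), ((frob u)^-1 *: u); rewrite fip_normalize.
have [_ [x [x1 ->]]] := inf_adherent (divr_gt0 (exprn_gt0 2 e0) K0) inf_rayleigh.
rewrite -/lam -ltrBlDl => xlam.
have res : frob ((L - lam%:M) *m x) <= e.
  rewrite frob_le; last exact: ltW.
  apply: le_trans (rayleigh_residual x1) _.
  by rewrite -/K mulrC -ler_pdivlMr // ltW.
have fx1 : frob x = 1 by rewrite /frob x1 sqrtr1.
have := Lc x; rewrite fx1 mulr1 => /le_trans; apply.
have -> : L *m x = lam *: x + (L - lam%:M) *m x by rewrite mulmxBl mul_scalar_mx addrC subrK.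
apply: le_trans (frobD _ _) _; rewrite frobZ ger0_norm ?rayleigh_ge0 //.
by rewrite fx1 mulr1 lerD2l.
Qed.

End Rayleigh.

End QuadraticForms.

Section Blocks.
Variables (R : realType) (n d : nat).
Implicit Types (M : 'M[R]_(n * d)) (i j : 'I_n) (a b : 'I_d).

Definition blk_index (k : 'I_(n * d)) : 'I_n * 'I_d :=
  enum_val (cast_ord (esym (mxvec_cast n d)) k).

Lemma blk_indexK i a : blk_index (mxvec_index i a) = (i, a).
Proof. by rewrite /blk_index /mxvec_index cast_ordK enum_rankK. Qed.

Lemma blk_indexKV k : mxvec_index (blk_index k).1 (blk_index k).2 = k.
Proof. by rewrite /mxvec_index -surjective_pairing /blk_index enum_valK cast_ordKV. Qed.

Lemma eq_mxvec_index i a j b :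
  (mxvec_index i a == mxvec_index j b :> 'I_(n * d)) = (i == j) && (a == b).
Proof.
apply/eqP/andP => [e|[/eqP -> /eqP ->] //].
by have := blk_indexK i a; rewrite e blk_indexK => -[-> ->].
Qed.

Lemma sum_mxvec_index (F : 'I_(n * d) -> R) :
  \sum_k F k = \sum_i \sum_a F (mxvec_index i a).
Proof.
rewrite pair_big /= (reindex (fun ia : 'I_n * 'I_d => mxvec_index ia.1 ia.2)) //=.
by exists blk_index => [[i a] _|k _]; rewrite ?blk_indexK ?blk_indexKV.
Qed.

Definition blkcol k (F : 'I_n -> 'M[R]_(d, k)) : 'M[R]_(n * d, k) :=
  \matrix_(l, c) F (blk_index l).1 (blk_index l).2 c.

Definition blkdiag (F : 'I_n -> 'M[R]_d) : 'M[R]_(n * d) :=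
  \matrix_(k, l) if (blk_index k).1 == (blk_index l).1
                 then F (blk_index k).1 (blk_index k).2 (blk_index l).2 else 0.

Lemma rblk_blkcol k (F : 'I_n -> 'M[R]_(d, k)) i : rblk (blkcol F) i = F i.
Proof. by apply/matrixP => a c; rewrite !mxE blk_indexK. Qed.

Lemma blk_blkdiag F i j : blk (blkdiag F) i j = if i == j then F i else 0.
Proof.
by apply/matrixP => a b; rewrite !mxE !blk_indexK /=; case: eqP => [->|]; rewrite ?mxE.
Qed.

Lemma rblk_inj k (X Y : 'M[R]_(n * d, k)) : (forall i, rblk X i = rblk Y i) -> X = Y.
Proof.
move=> XY; apply/matrixP => l c; rewrite -(blk_indexKV l).
by have /matrixP /(_ (blk_index l).2 c) := XY (blk_index l).1; rewrite !mxE.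
Qed.

Lemma blk_inj M M' : (forall i j, blk M i j = blk M' i j) -> M = M'.
Proof.
move=> MM'; apply/matrixP => k l; rewrite -(blk_indexKV k) -(blk_indexKV l).
have /matrixP /(_ (blk_index k).2 (blk_index l).2) := MM' (blk_index k).1 (blk_index l).1.
by rewrite !mxE.
Qed.

Lemma rblkD k (X Y : 'M[R]_(n * d, k)) i : rblk (X + Y) i = rblk X i + rblk Y i.
Proof. by apply/matrixP => a c; rewrite !mxE. Qed.

Lemma rblkN k (X : 'M[R]_(n * d, k)) i : rblk (- X) i = - rblk X i.
Proof. by apply/matrixP => a c; rewrite !mxE. Qed.

Lemma blkD M M' i j : blk (M + M') i j = blk M i j + blk M' i j.
Proof. by apply/matrixP => a b; rewrite !mxE. Qed.

Lemma blk0 i j : blk (0 : 'M[R]_(n * d)) i j = 0.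
Proof. by apply/matrixP => a b; rewrite !mxE. Qed.

Lemma blk_tr M i j : blk M^T i j = (blk M j i)^T.
Proof. by apply/matrixP => a b; rewrite !mxE. Qed.

Lemma rblk_mul k M (X : 'M[R]_(n * d, k)) i :
  rblk (M *m X) i = \sum_j blk M i j *m rblk X j.
Proof.
apply/matrixP => a c; rewrite !mxE summxE sum_mxvec_index; apply: eq_bigr => j _.
by rewrite mxE; apply: eq_bigr => b _; rewrite !mxE.
Qed.

Lemma rblk_mulr k l (X : 'M[R]_(n * d, k)) (Y : 'M[R]_(k, l)) i :
  rblk (X *m Y) i = rblk X i *m Y.
Proof. by apply/matrixP => a c; rewrite !mxE; apply: eq_bigr => e _; rewrite !mxE. Qed.

Lemma blk_mul_tr k (X Y : 'M[R]_(n * d, k)) i j :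
  blk (X *m Y^T) i j = rblk X i *m (rblk Y j)^T.
Proof. by apply/matrixP => a b; rewrite !mxE; apply: eq_bigr => c _; rewrite !mxE. Qed.

Lemma blkrow_mul k M (X : 'M[R]_(n * d, k)) i :
  blkrow M i *m X = \sum_j blk M i j *m rblk X j.
Proof.
rewrite -rblk_mul; apply/matrixP => a c; rewrite !mxE.
by apply: eq_bigr => l _; rewrite !mxE.
Qed.

Lemma tr_mul_rblk k l (X : 'M[R]_(n * d, k)) (Y : 'M[R]_(n * d, l)) :
  X^T *m Y = \sum_i (rblk X i)^T *m rblk Y i.
Proof.
apply/matrixP => a c; rewrite !mxE summxE sum_mxvec_index; apply: eq_bigr => i _.
by rewrite mxE; apply: eq_bigr => b _; rewrite !mxE.
Qed.

Lemma fip_blk M M' : fip M M' = \sum_i \sum_j fip (blk M i j) (blk M' i j).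
Proof.
rewrite /fip sum_mxvec_index; apply: eq_bigr => i _.
rewrite [RHS]exchange_big /=; apply: eq_bigr => a _.
by rewrite sum_mxvec_index; apply: eq_bigr => j _; apply: eq_bigr => b _; rewrite !mxE.
Qed.

Lemma fip_rblk k (X Y : 'M[R]_(n * d, k)) :
  fip X Y = \sum_i fip (rblk X i) (rblk Y i).
Proof.
rewrite /fip sum_mxvec_index; apply: eq_bigr => i _; apply: eq_bigr => a _.
by apply: eq_bigr => c _; rewrite !mxE.
Qed.

Lemma mxrank_blk M i j : (\rank (blk M i j) <= \rank M)%N.
Proof.
have -> : blk M i j = rowsub (mxvec_index i) 1%:M *m (M *m colsub (mxvec_index j) 1%:M).
  by rewrite mulmx_colsub mulmx1 mul_rowsub_mx mul1mx; apply/matrixP => a b; rewrite !mxE.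
by apply: leq_trans (mxrankM_maxr _ _) (mxrankM_maxl _ _).
Qed.

Lemma rblk_Zmx i : rblk (Zmx R n d) i = 1%:M.
Proof.
apply/matrixP => a b; rewrite !mxE.
under eq_bigr => j _ do rewrite eq_mxvec_index.
rewrite (bigD1 i) //= eqxx big1 ?addr0 // => j.
by rewrite eq_sym => /negbTE ->.
Qed.

Lemma tr_Zmx_mul k (X : 'M[R]_(n * d, k)) : (Zmx R n d)^T *m X = \sum_i rblk X i.
Proof. by rewrite tr_mul_rblk; apply: eq_bigr => i _; rewrite rblk_Zmx trmx1 mul1mx. Qed.

Lemma blk_Amx (Delta : 'M[R]_(n * d)) i j : blk (Amx Delta) i j = 1%:M + blk Delta i j.
Proof. by rewrite /Amx blkD blk_mul_tr !rblk_Zmx trmx1 mulmx1. Qed.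

Lemma gram_sdp_feasible k (V : 'M[R]_(n * d, k)) :
  (forall i, rblk V i *m (rblk V i)^T = 1%:M) -> sdp_feasible (V *m V^T).
Proof. by move=> V1; split=> [|i]; [exact: gram_psd | rewrite blk_mul_tr V1]. Qed.

Lemma qf_Amx_perp (Delta : 'M[R]_(n * d)) (v : 'cV[R]_(n * d)) :
  (Zmx R n d)^T *m v = 0 -> qf (Amx Delta) v <= opnorm Delta * fip v v.
Proof.
move=> Zv; rewrite /qf mulmxDl fipDr -mulmxA -fip_trmull Zv fip0l add0r.
apply: le_trans (fip_le_frob _ _) _; rewrite -frob_sqr expr2 mulrCA.
by rewrite ler_wpM2l ?frob_ge0 ?frob_mulmx_opnorm.
Qed.

End Blocks.

Section CriticalPoint.
Variables (R : realType) (n d p : nat) (Delta : 'M[R]_(n * d)) (S : 'M[R]_(n * d, p)).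
Hypotheses (dp : (d < p)%N) (sD : Delta^T = Delta) (D0 : forall i, blk Delta i i = 0).
Hypothesis soc : second_order_critical (Amx Delta) S.

Local Notation A := (Amx Delta).
Local Notation Zm := (Zmx R n d).

Definition Ssum : 'M[R]_(d, p) := \sum_j rblk S j.
Definition Ecross i : 'M[R]_(d, p) := \sum_(j < n | j != i) blk Delta i j *m rblk S j.

Lemma Ecross_blkrow i : Ecross i = blkrow Delta i *m S.
Proof. by rewrite blkrow_mul [RHS](bigD1 i) //= D0 mul0mx add0r. Qed.

Lemma rblkS_unitary i : rblk S i *m (rblk S i)^T = 1%:M.
Proof. by case: soc => + _; apply. Qed.

Lemma Amx_sym : A^T = A.
Proof. by rewrite linearD /= trmx_mul trmxK sD. Qed.

Lemma blk_Amx_tr i j : (blk A i j)^T = blk A j i.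
Proof. by rewrite -blk_tr Amx_sym. Qed.

Lemma Lam_sym i : (Lam A S i)^T = Lam A S i.
Proof.
rewrite /Lam linearZ raddf_sum /=; congr (_ *: _); apply: eq_bigr => j _.
by rewrite linearD /= !trmx_mul !trmxK !blk_Amx_tr addrC !mulmxA.
Qed.

Lemma Lam_mul_rblkS i : Lam A S i *m rblk S i = Ssum + Ecross i.
Proof.
case: soc => _ [<- _]; rewrite Ecross_blkrow blkrow_mul /Ssum.
by rewrite -big_split; apply: eq_bigr => j _; rewrite blk_Amx mulmxDl mul1mx.
Qed.

Lemma frob_Lam_mul i (x : 'cV[R]_d) :
  frob (Lam A S i *m x) = frob ((Ssum + Ecross i)^T *m x).
Proof.
rewrite -Lam_mul_rblkS trmx_mul Lam_sym /frob -mulmxA fip_trmull mulmxA.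
by rewrite rblkS_unitary mul1mx.
Qed.

Lemma Lam_ge1 i u : fip u u <= qf (Lam A S i) u.
Proof.
have [w w0 Sw] := kernel_nonzero (rblk S i) dp.
pose Sd := blkcol (fun j => if j == i then u *m w^T else 0).
have Sdj j : rblk Sd j = if j == i then u *m w^T else 0 by rewrite rblk_blkcol.
have tangent_Sd j : tangent (rblk S j) (rblk Sd j).
  rewrite /tangent Sdj; case: eqP => [->|_]; last by rewrite trmx0 mulmx0 mul0mx addr0.
  by rewrite trmx_mul trmxK mulmxA Sw mul0mx add0r -mulmxA -trmx_mul Sw trmx0 mulmx0.
have uwwu : rblk Sd i *m (rblk Sd i)^T = fip w w *: (u *m u^T).
  rewrite Sdj eqxx trmx_mul trmxK mulmxA -(mulmxA u) -{1}(trmxK w) tr_mul_fip.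
  by rewrite mul_mx_scalar -scalemxAl trmxK.
case: soc => _ [_ /(_ Sd tangent_Sd)].
rewrite (bigD1 i) //= (bigD1 i) //= [X in _ + X <= _]big1 => [|j ji]; last first.
  by rewrite big1 // => l _; rewrite (Sdj j) (negbTE ji) mul0mx fip0r.
rewrite [X in _ + X + 0 <= _]big1 => [|j ji]; last first.
  by rewrite (Sdj j) (negbTE ji) trmx0 mulmx0 fip0r.
rewrite [X in _ <= X](bigD1 i) //= big1 => [|j ji]; last first.
  by rewrite (Sdj j) (negbTE ji) mul0mx fip0r.
rewrite !addr0 uwwu !fipZr !fip_outer blk_Amx D0 addr0 /qf mul1mx.
by rewrite ler_pM2l // lt_def fip_ge0 andbT; apply: contra w0 => /eqP /fip_eq0 ->.
Qed.

Definition Lamdiag := blkdiag (fun i => Lam A S i).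
Definition cert := Lamdiag - A.

Lemma Lamdiag_sym : Lamdiag^T = Lamdiag.
Proof.
apply: blk_inj => i j; rewrite blk_tr !blk_blkdiag eq_sym.
by case: eqP => [->|_]; rewrite ?Lam_sym ?trmx0.
Qed.

Lemma cert_sym : cert^T = cert.
Proof. by rewrite linearB /= Lamdiag_sym Amx_sym. Qed.

Lemma rblk_Lamdiag_mul k (X : 'M[R]_(n * d, k)) i :
  rblk (Lamdiag *m X) i = Lam A S i *m rblk X i.
Proof.
rewrite rblk_mul (bigD1 i) //= big1 ?addr0 => [|j ji]; first by rewrite blk_blkdiag eqxx.
by rewrite blk_blkdiag eq_sym (negbTE ji) mul0mx.
Qed.

Lemma cert_mulS : cert *m S = 0.
Proof.
apply: rblk_inj => i; rewrite mulmxBl rblkD rblkN rblk_Lamdiag_mul rblk_mul.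
case: soc => _ [-> _]; rewrite subrr.
by apply/matrixP => a b; rewrite !mxE.
Qed.

Lemma qf_cert_shift v w : qf cert (v + S *m w) = qf cert v.
Proof.
rewrite /qf mulmxDr mulmxA cert_mulS mul0mx addr0 fipDl.
by rewrite -(fip_trmull cert (S *m w) v) cert_sym mulmxA cert_mulS mul0mx fip0l addr0.
Qed.

Lemma qf_cert v : qf cert v = \sum_i qf (Lam A S i) (rblk v i) - qf A v.
Proof.
by rewrite qfB /qf fip_rblk; congr (_ - _); apply: eq_bigr => i _; rewrite rblk_Lamdiag_mul.
Qed.

Lemma Amx_Lamdiag_cert : A = Lamdiag - cert.
Proof. by rewrite opprB addrC subrK. Qed.

Lemma fip_Lamdiag X : (forall i, blk X i i = 1%:M) -> fip Lamdiag X = \sum_i \tr (Lam A S i).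
Proof.
move=> X1; rewrite fip_blk; apply: eq_bigr => i _.
rewrite (bigD1 i) //= big1 ?addr0 => [|j ji]; last by rewrite blk_blkdiag eq_sym (negbTE ji) fip0l.
by rewrite blk_blkdiag eqxx X1 fipE mulmx1 mxtrace_tr.
Qed.

Lemma fip_Amx_gram k (V : 'M[R]_(n * d, k)) : (forall i, blk (V *m V^T) i i = 1%:M) ->
  fip A (V *m V^T) = \sum_i \tr (Lam A S i) - \sum_c qf cert (col c V).
Proof.
move=> V1; rewrite [in LHS]Amx_Lamdiag_cert fipDl fipNl fip_Lamdiag //.
by rewrite (fip_mul_tr _ cert_sym).
Qed.

Lemma SS_blk_diag i : blk (S *m S^T) i i = 1%:M.
Proof. by rewrite blk_mul_tr rblkS_unitary. Qed.

Lemma fip_Amx_SS : fip A (S *m S^T) = \sum_i \tr (Lam A S i).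
Proof.
rewrite [in LHS]Amx_Lamdiag_cert fipDl fipNl fip_Lamdiag; last exact: SS_blk_diag.
by rewrite fipE cert_sym mulmxA cert_mulS mul0mx mxtrace0 subr0.
Qed.

Definition Emax := \big[Num.max/0]_(i < n) opnorm (Ecross i).

Lemma Emax_ge0 : 0 <= Emax.
Proof. exact: bigmax_ge_id. Qed.

Section Proximity.
Variables (r : R) (Q : 'M[R]_(d, p)).
Hypotheses (QQ : Q *m Q^T = 1%:M) (SQ : \sum_i fip (rblk S i - Q) (rblk S i - Q) <= r ^+ 2).

Lemma frob_Ssum_tr_ge (x : 'cV[R]_d) : (n%:R - r ^+ 2 / 2) * frob x <= frob (Ssum^T *m x).
Proof.
pose dev j := (rblk S j)^T *m x - Q^T *m x.
have dev_le : \sum_j fip (dev j) (dev j) <= r ^+ 2 * fip x x.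
  apply: le_trans (_ : \sum_j fip (rblk S j - Q) (rblk S j - Q) * fip x x <= _); last first.
    by rewrite -mulr_suml ler_wpM2r ?fip_ge0.
  apply: ler_sum => j _; rewrite /dev -mulmxBl -linearB /= -!frob_sqr -exprMn.
  by rewrite ler_sqr ?nnegrE ?mulr_ge0 ?frob_ge0 // -(frob_tr (_ - _)) frob_mulmx.
have dev_eq : \sum_j fip (dev j) (dev j) = 2 * n%:R * fip x x - 2 * fip (Ssum^T *m x) (Q^T *m x).
  have -> : 2 * n%:R * fip x x = \sum_(j < n) 2 * fip x x.
    by rewrite sumr_const card_ord -mulr_natr; ring.
  rewrite /Ssum linear_sum mulmx_suml fip_suml [X in _ - X]mulr_sumr -sumrB.
  apply: eq_bigr => j _; rewrite fipDl !fipDr !fipNl !fipNr (fipC (Q^T *m x)).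
  by rewrite !fip_coisometry ?rblkS_unitary //; ring.
have cs : fip (Ssum^T *m x) (Q^T *m x) <= frob (Ssum^T *m x) * frob x.
  have fQ : frob (Q^T *m x) = frob x by rewrite /frob fip_coisometry.
  by rewrite -fQ fip_le_frob.
have [->|x0] := eqVneq x 0; first by rewrite mulmx0 !frob0 mulr0.
rewrite -(ler_pM2r (frob_gt0 x0)); move: dev_le cs; rewrite dev_eq -frob_sqr.
have := frob_ge0 (Ssum^T *m x); nra.
Qed.

Lemma Lam_ge i u : (n%:R - r ^+ 2 / 2 - Emax) * fip u u <= qf (Lam A S i) u.
Proof.
have Lam_psd y : 0 <= qf (Lam A S i) y := le_trans (fip_ge0 y) (Lam_ge1 i y).
apply: (qf_ge_of_frob_mul_ge (Lam_sym i) Lam_psd) => x.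
rewrite frob_Lam_mul linearD mulmxDl.
set a := Ssum^T *m x; set b := (Ecross i)^T *m x.
have tri : frob a <= frob (a + b) + frob b.
  by rewrite -(frobN b); apply: le_trans (frobD _ _); rewrite addrK.
have Eb : frob b <= Emax * frob x.
  apply: le_trans (frob_trmulmx_opnorm _ _) _; rewrite ler_wpM2r ?frob_ge0 //.
  exact: le_bigmax.
have := frob_Ssum_tr_ge x; rewrite -/a; lra.
Qed.

Hypothesis margin : 0 < n%:R - r ^+ 2 / 2 - Emax - opnorm Delta.
Let eps := n%:R - r ^+ 2 / 2 - Emax - opnorm Delta.

Lemma cert_coercive_perp v : Zm^T *m v = 0 -> eps * fip v v <= qf cert v.
Proof.
move=> Zv; rewrite qf_cert.
have := qf_Amx_perp Delta Zv.
have : (n%:R - r ^+ 2 / 2 - Emax) * fip v v <= \sum_i qf (Lam A S i) (rblk v i).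
  by rewrite fip_rblk mulr_sumr; apply: ler_sum => i _; apply: Lam_ge.
rewrite /eps; lra.
Qed.

Lemma Ssum_gram_unit : Ssum *m Ssum^T \in unitmx.
Proof.
rewrite unitmxE unitfE; apply/negP => /det0P [v v0 vT].
have Tv0 : frob (Ssum^T *m v^T) = 0.
  have TT_sym : (Ssum *m Ssum^T)^T = Ssum *m Ssum^T by rewrite trmx_mul trmxK.
  by rewrite /frob fip_trmull mulmxA -TT_sym -trmx_mul vT trmx0 fip0r sqrtr0.
have := frob_Ssum_tr_ge v^T; rewrite Tv0 pmulr_rle0; last first.
  by move: margin; have := Emax_ge0; have := opnorm_ge0 Delta; set q := r ^+ 2 / 2; lra.
by rewrite leNgt frob_gt0 ?trmx_eq0.
Qed.

Definition Kmx := S *m Ssum^T *m invmx (Ssum *m Ssum^T).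

Lemma cert_coercive v :
  eps * fip (v - Kmx *m (Zm^T *m v)) (v - Kmx *m (Zm^T *m v)) <= qf cert v.
Proof.
pose w := - (Ssum^T *m invmx (Ssum *m Ssum^T) *m (Zm^T *m v)).
have -> : v - Kmx *m (Zm^T *m v) = v + S *m w by rewrite /w /Kmx mulmxN !mulmxA.
rewrite -(qf_cert_shift v w); apply: cert_coercive_perp.
rewrite mulmxDr /w !mulmxN !mulmxA (tr_Zmx_mul S) -/Ssum.
by rewrite mulmxV ?Ssum_gram_unit // mul1mx subrr.
Qed.

Lemma qf_cert_ge0 v : 0 <= qf cert v.
Proof. by apply: le_trans (cert_coercive v); rewrite mulr_ge0 ?fip_ge0 ?ltW. Qed.

Lemma qf_cert_eq0 v : qf cert v = 0 -> v = Kmx *m (Zm^T *m v).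
Proof.
move=> Bv0; have := cert_coercive v; rewrite Bv0 pmulr_rle0 // => h.
by apply/eqP; rewrite -subr_eq0; apply/eqP/fip_eq0/le_anti; rewrite h fip_ge0.
Qed.

Lemma S_Kmx_Ssum : S = Kmx *m Ssum.
Proof.
apply: mulmx_inj_col => w.
have /qf_cert_eq0 -> : qf cert (S *m w) = 0.
  by rewrite -[S *m w]add0r qf_cert_shift /qf mulmx0 fip0r.
by rewrite !mulmxA -(mulmxA _ _ S) tr_Zmx_mul.
Qed.

Lemma gram_cert_range k (V : 'M[R]_(n * d, k)) :
  \sum_c qf cert (col c V) = 0 -> V = Kmx *m (Zm^T *m V).
Proof.
move=> V0; apply/matrixP => a c.
have /qf_cert_eq0 /matrixP /(_ a 0) : qf cert (col c V) = 0.
  by apply: (psumr_eq0P _ V0) => // l _; apply: qf_cert_ge0.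
by rewrite !colE !mulmxA !mulmx_delta.
Qed.

Hypothesis n_gt0 : (0 < n)%N.
Let i0 : 'I_n := Ordinal n_gt0.

Lemma SS_Kmx : S *m S^T = Kmx *m (Ssum *m Ssum^T) *m Kmx^T.
Proof. by rewrite {1 2}S_Kmx_Ssum trmx_mul !mulmxA. Qed.

Lemma sdp_max_unique X : sdp_feasible X -> fip A (S *m S^T) <= fip A X -> X = S *m S^T.
Proof.
move=> [[sX pX] X1]; have [V XV] : exists V : 'M[R]_(n * d), X = V *m V^T.
  by apply: psd_gram => // y; rewrite -qfE.
rewrite XV fip_Amx_SS fip_Amx_gram -?XV // lerBrDr gerDl => V0.
have /gram_cert_range VK : \sum_c qf cert (col c V) = 0.
  by apply/le_anti; rewrite V0 sumr_ge0 // => c _; apply: qf_cert_ge0.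
set W := Zm^T *m V *m (Zm^T *m V)^T.
have XK : X = Kmx *m W *m Kmx^T by rewrite XV {1 2}VK trmx_mul !mulmxA.
rewrite XK SS_Kmx; congr (_ *m _ *m _).
apply: (@sandwich_inj _ _ (rblk Kmx i0)).
  by have := X1 i0; rewrite XK blk_mul_tr rblk_mulr.
by have := SS_blk_diag i0; rewrite SS_Kmx blk_mul_tr rblk_mulr.
Qed.

Lemma rank_SS : \rank (S *m S^T) = d.
Proof.
apply/eqP; rewrite eqn_leq; apply/andP; split.
  by rewrite {1}S_Kmx_Ssum -mulmxA (leq_trans (mxrankM_maxl _ _)) ?rank_leq_col.
by rewrite -{1}(mxrank1 R d) -(SS_blk_diag i0) mxrank_blk.
Qed.

Lemma unique_global_max_of_margin : unique_global_max A S.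
Proof.
have [L TL] : exists L : 'M[R]_d, Ssum *m Ssum^T = L *m L^T.
  by apply: psd_gram => [|y]; rewrite ?trmx_mul ?trmxK // qf_mul_tr fip_ge0.
have RR : Kmx *m L *m (Kmx *m L)^T = S *m S^T by rewrite SS_Kmx TL trmx_mul !mulmxA.
have fobj_le R' : P_feasible R' -> fobj A R' <= fip A (S *m S^T).
  move=> R'1; rewrite /fobj fip_Amx_SS fip_Amx_gram ?gerDl ?oppr_le0 ?sumr_ge0 // => [c _|i].
    exact: qf_cert_ge0.
  by rewrite blk_mul_tr R'1.
split.
- exact: gram_sdp_feasible rblkS_unitary.
- move=> X fX XSS; rewrite ltNge; apply/negP => le; exact: XSS (sdp_max_unique fX le).
- exact: rank_SS.
exists (Kmx *m L); split=> [i|//|R' R'1|R' R'1 eqR'].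
- by rewrite -blk_mul_tr RR SS_blk_diag.
- by rewrite /fobj RR fobj_le.
apply: sdp_max_unique; first exact: gram_sdp_feasible.
by rewrite -RR -/(fobj A _) eqR'.
Qed.

End Proximity.

End CriticalPoint.

Section Distance.
Local Open Scope classical_set_scope.
Variables (R : realType) (n d p : nat) (S : 'M[R]_(n * d, p)).
Hypothesis dp : (d <= p)%N.

Lemma exists_coisometry : exists Q : 'M[R]_(d, p), Q *m Q^T = 1%:M.
Proof. by exists (pid_mx d); rewrite tr_pid_mx mul_pid_mx !minnn (minn_idPr dp) pid_mx_1. Qed.

Let dist_set := [set y | exists Q : 'M[R]_(d, p), Q *m Q^T = 1%:M /\
                   y = Num.sqrt (\sum_(i < n) frob (rblk S i - Q) ^+ 2)].

Lemma dist_set_inf : has_inf dist_set.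
Proof.
split; last by exists 0 => _ [Q [_ ->]]; apply: sqrtr_ge0.
by have [Q QQ] := exists_coisometry; eexists; exists Q.
Qed.

Lemma dF_ge0 : 0 <= dF S.
Proof. by apply: lb_le_inf => [|_ [Q [_ ->]]]; [case: dist_set_inf | apply: sqrtr_ge0]. Qed.

Lemma dF_approx r : dF S < r -> exists Q : 'M[R]_(d, p),
  Q *m Q^T = 1%:M /\ \sum_i fip (rblk S i - Q) (rblk S i - Q) < r ^+ 2.
Proof.
move=> dFr; have e0 : 0 < r - dF S by rewrite subr_gt0.
have := inf_adherent e0 dist_set_inf; rewrite addrC subrK => -[_ [Q [QQ ->]] Qr].
exists Q; split => //; under eq_bigr do rewrite -frob_sqr.
have s0 : 0 <= \sum_(i < n) frob (rblk S i - Q) ^+ 2 by apply: sumr_ge0 => i _; apply: sqr_ge0.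
rewrite -(sqr_sqrtr s0) ltr_sqr ?nnegrE ?sqrtr_ge0 //.
exact: le_trans (sqrtr_ge0 _) (ltW Qr).
Qed.

End Distance.

Section Conclusion.
Variables (R : realType) (n d p : nat) (Delta : 'M[R]_(n * d)) (S : 'M[R]_(n * d, p)).
Hypotheses (dp : (d < p)%N) (D0 : forall i, blk Delta i i = 0).
Local Notation Zm := (Zmx R n d).

Lemma opnorm_Ecross_le i r (Q : 'M[R]_(d, p)) : Q *m Q^T = 1%:M ->
  \sum_j fip (rblk S j - Q) (rblk S j - Q) <= r ^+ 2 -> 0 <= r ->
  opnorm (Ecross Delta S i) <= opnorm (blkrow Delta i)^T * r + opnorm (blkrow Delta i *m Zm).
Proof.
move=> QQ SQ r0; apply: opnorm_le => x x1; set D := blkrow Delta i.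
have -> : Ecross Delta S i *m x = D *m ((S - Zm *m Q) *m x) + D *m Zm *m (Q *m x).
  by rewrite Ecross_blkrow // mulmxBl mulmxBr !mulmxA subrK.
have SZQ : frob (S - Zm *m Q) <= r.
  rewrite frob_le // fip_rblk (eq_bigr (fun j => fip (rblk S j - Q) (rblk S j - Q))) // => j _.
  by rewrite rblkD rblkN rblk_mulr rblk_Zmx mul1mx.
apply: le_trans (frobD _ _) (lerD _ _).
  have := frob_trmulmx_opnorm D^T ((S - Zm *m Q) *m x); rewrite trmxK => /le_trans; apply.
  rewrite ler_wpM2l ?opnorm_ge0 //; apply: le_trans (frob_mulmx _ _) _.
  by rewrite -[r]mulr1 ler_pM ?frob_ge0.
apply: le_trans (frob_mulmx_opnorm _ _) _; rewrite -[leRHS]mulr1 ler_wpM2l ?opnorm_ge0 //.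
exact: le_trans (frob_mul_coisometry _ QQ) x1.
Qed.

Lemma Emax_le rho : dF S <= rho ->
  Emax Delta S <= rho * \big[Num.max/0]_(i < n) opnorm (blkrow Delta i)^T
                  + \big[Num.max/0]_(i < n) opnorm (blkrow Delta i *m Zm).
Proof.
move=> dFrho; have rho0 : 0 <= rho := le_trans (dF_ge0 S (ltnW dp)) dFrho.
apply: bigmax_le => [|i _]; first by rewrite addr_ge0 ?mulr_ge0 ?bigmax_ge_id.
apply: le_trans (lerD (ler_wpM2l rho0 (le_bigmax _ _ i)) (le_bigmax _ _ i)).
rewrite mulrC; apply: ler_affine_gt; first exact: opnorm_ge0.
move=> r rho_r; have [Q [QQ SQ]] := dF_approx (ltnW dp) (le_lt_trans dFrho rho_r).
exact: opnorm_Ecross_le QQ (ltW SQ) (ltW (le_lt_trans rho0 rho_r)).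
Qed.

Lemma Emax0 : Emax 0 S = 0.
Proof.
apply: bigmax_eq_id => i _.
by rewrite /Ecross big1 ?opnorm0 // => j _; rewrite blk0 mul0mx.
Qed.

Lemma unique_global_max_of_proximity rho : (0 < n)%N -> Delta^T = Delta ->
  second_order_critical (Amx Delta) S -> dF S <= rho -> (rho = 0 -> Delta = 0) ->
  3 / 2 * rho ^+ 2 <= n%:R - Emax Delta S - opnorm Delta ->
  unique_global_max (Amx Delta) S.
Proof.
move=> n_gt0 sD soc dFrho rho0D.
set U := n%:R - Emax Delta S - opnorm Delta => rhoU.
have dF0 := dF_ge0 S (ltnW dp).
have : dF S ^+ 2 < 2 * U.
  have [rho0|rho_neq0] := eqVneq rho 0.
    have dF_eq0 : dF S = 0 by apply: le_anti; rewrite dF0 -rho0 dFrho.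
    rewrite /U dF_eq0 (rho0D rho0) Emax0 opnorm0 expr0n !subr0 mulr_gt0 ?ltr0n //.
  have rho_gt0 : 0 < rho by rewrite lt_def rho_neq0 (le_trans dF0).
  have : dF S ^+ 2 <= rho ^+ 2 by rewrite ler_sqr ?nnegrE // ltW.
  have := exprn_gt0 2 rho_gt0; lra.
case/(exists_sqr_between dF0) => r /(dF_approx (ltnW dp)) [Q [QQ SQ]] rU.
apply: (unique_global_max_of_margin dp sD D0 soc QQ (ltW SQ)) => //.
rewrite /U in rU; lra.
Qed.

End Conclusion.

Unset Implicit Arguments.

Theorem proposition2 (R : realType) (n d p : nat) (Delta : 'M[R]_(n * d))
    (S : 'M[R]_(n * d, p)) (delta : R) :
  (1 <= n)%N -> (1 <= d)%N -> (d < p)%N ->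
  Delta^T = Delta -> (forall i, blk Delta i i = 0) ->
  0 < delta ->
  second_order_critical (Amx Delta) S ->
  dF S <= delta * Num.sqrt (d%:R / n%:R) * opnorm Delta ->
  let M := \big[Num.max/0]_(i < n)
             opnorm (\sum_(j < n | j != i) blk Delta i j *m rblk S j) in
  let mD := \big[Num.max/0]_(i < n) opnorm (blkrow Delta i)^T in
  let mDZ := \big[Num.max/0]_(i < n) opnorm (blkrow Delta i *m Zmx R n d) in
  [/\ M <= delta * Num.sqrt (d%:R / n%:R) * opnorm Delta * mD + mDZ,
      n%:R >= 3 * delta ^+ 2 * d%:R * opnorm Delta ^+ 2 / (2 * n%:R)
              + M + opnorm Delta ->
        unique_global_max (Amx Delta) S &
      n%:R >= 3 * delta ^+ 2 * d%:R * opnorm Delta ^+ 2 / (2 * n%:R)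
              + delta * Num.sqrt (d%:R / n%:R) * opnorm Delta * mD + mDZ
              + opnorm Delta ->
        unique_global_max (Amx Delta) S].
Proof.
move=> n_gt0 d_gt0 dp sD D0 delta_gt0 soc dFrho M mD mDZ.
set rho := delta * Num.sqrt (d%:R / n%:R) * opnorm Delta in dFrho *.
have sqrt_gt0 : 0 < Num.sqrt (d%:R / n%:R) :> R by rewrite sqrtr_gt0 divr_gt0 ?ltr0n.
have rho0D : rho = 0 -> Delta = 0.
  by move=> /eqP; rewrite !mulf_eq0 (gt_eqF delta_gt0) (gt_eqF sqrt_gt0) /= => /eqP /opnorm_eq0.
have rho_sqr : 3 * delta ^+ 2 * d%:R * opnorm Delta ^+ 2 / (2 * n%:R) = 3 / 2 * rho ^+ 2.
  by rewrite /rho !exprMn sqr_sqrtr ?divr_ge0 ?ler0n //; field; rewrite pnatr_eq0 -lt0n.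
have M_le : M <= rho * mD + mDZ := Emax_le dp D0 dFrho.
have uniq_M : 3 * delta ^+ 2 * d%:R * opnorm Delta ^+ 2 / (2 * n%:R) + M + opnorm Delta <= n%:R ->
    unique_global_max (Amx Delta) S.
  rewrite rho_sqr => h; apply: (unique_global_max_of_proximity dp D0 n_gt0 sD soc dFrho rho0D).
  by rewrite (_ : Emax Delta S = M) //; lra.
by split=> // h; apply: uniq_M; lra.
Qed.
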